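(* Let $T$ be a compact torus with Lie algebra $\mathfrak t$ and cocharacter lattice $\mathfrak t_{\mathbb Z}\subset\mathfrak t$, let $a_1,\dots,a_n$ be the weights of $T$ on a Lagrangian half of the representation $V$ as in the context, and let $R^+$ be the set of positive roots of $G$ with respect to $T$. Define $$\Delta(\beta)=\frac12\sum_{j=1}^n|a_j(\beta)|-\sum_{\alpha\in R^+}|\alpha(\beta)|,\qquad\beta\in\mathfrak t.$$ Then $\Delta(\beta)>0$ for all nonzero $\beta\in\mathfrak t$ if and only if $\Delta(\beta)>0$ for all nonzero $\beta\in\mathfrak t_{\mathbb Z}$.
   Context: $G$ is a connected compact Lie group with maximal torus $T$, acting on a complex symplectic vector space $(V,\Omega)$ of dimension $2n$ through $USp(V,\Omega)$. A Darboux basis $x_1,\dots,x_n,y_1,\dots,y_n$ of $T$-weight vectors is fixed with $\beta x_j=-a_j(\beta)x_j$, $\beta y_j=a_j(\beta)y_j$ for $\beta\in\mathfrak t$; the $a_j$ and the roots $\alpha\in R^+$ are linear functionals on $\mathfrak t$ (with imaginary values) which take values in $i\mathbb Q$ (up to a fixed common normalization, values in a rational multiple of $i\mathbb Z$) on $\mathfrak t_{\mathbb Z}$. *)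

From HB Require Import structures.
From mathcomp Require Import all_boot all_order all_algebra.
From mathcomp Require Import reals.
Set Implicit Arguments. Unset Strict Implicit. Unset Printing Implicit Defensive.
Import Order.TTheory GRing.Theory Num.Theory.
Local Open Scope ring_scope.

(* t is identified with R^r via a Z-basis of the cocharacter lattice t_Z,
   so t_Z = integer row vectors.  A linear functional on t taking values in
   i*Q on t_Z is i times a real functional with rational coefficients c;
   its absolute value at beta is |sum_k c_k beta_k|. *)
Definition lin (R : realType) (r : nat) (c : 'rV[rat]_r) (beta : 'rV[R]_r) : R :=
  \sum_(k < r) ratr (c 0 k) * beta 0 k.

Definition Delta (R : realType) (r n m : nat)
  (a : 'I_n -> 'rV[rat]_r) (alpha : 'I_m -> 'rV[rat]_r) (beta : 'rV[R]_r) : R :=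
  2^-1 * (\sum_(j < n) `|lin (a j) beta|) - \sum_(i < m) `|lin (alpha i) beta|.

From mathcomp Require Import all_boot all_order all_algebra.
From mathcomp Require Import reals.
From mathcomp Require Import ring lra.
Import Order.TTheory GRing.Theory Num.Theory.
Set Implicit Arguments. Unset Strict Implicit. Unset Printing Implicit Defensive.
Local Open Scope ring_scope.

(* Suppose [Delta b <= 0] for some real [b != 0].  On the cone of vectors at
   which each weight, each root and each coordinate has the same sign as at
   [b], [Delta] agrees with a linear form [D] with rational coefficients.
   Asking also that [D] keep its sign at [b] cuts out a relatively open subset
   of the subspace on which the rational forms vanishing at [b] vanish.
   Rational points are dense in that subspace, so this set contains a rational
   vector, and after clearing denominators an integral one, [z != 0] with
   [Delta z = D z <= 0]. *)

Lemma sgz_near (R : realDomainType) (t u : R) : `|u - t| < `|t| -> sgz u = sgz t.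
Proof.
rewrite ltr_distlC; have [t_lt0 | t_gt0 | ->] := ltgtP t 0.
- rewrite ltr0_norm // => /andP[lo hi]; rewrite !ltr0_sgz //; lra.
- rewrite gtr0_norm // => /andP[lo hi]; rewrite !gtr0_sgz //; lra.
- by rewrite normr0 subr0 addr0 lt_asym.
Qed.

Lemma normr_sgz_eq (R : realDomainType) (t u : R) : sgz u = sgz t -> `|u| = (sgz t)%:~R * u.
Proof. by move=> <-; rewrite normrEsg sgrEz. Qed.

Section LinearForms.
Variables (R : realType) (r : nat).
Implicit Types (f g : 'rV[rat]_r) (y : 'rV[R]_r).

Lemma lin0 y : lin 0 y = 0.
Proof. by rewrite /lin big1 // => k _; rewrite mxE rmorph0 mul0r. Qed.

Lemma linD f g y : lin (f + g) y = lin f y + lin g y.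
Proof. by rewrite /lin -big_split; apply: eq_bigr => k _; rewrite mxE rmorphD mulrDl. Qed.

Lemma linZ q f y : lin (q *: f) y = ratr q * lin f y.
Proof. by rewrite /lin mulr_sumr; apply: eq_bigr => k _; rewrite mxE rmorphM mulrA. Qed.

Lemma linN f y : lin (- f) y = - lin f y.
Proof. by rewrite -scaleN1r linZ rmorphN1 mulN1r. Qed.

Lemma lin_sum (I : Type) (s : seq I) (P : pred I) (F : I -> 'rV[rat]_r) y :
  lin (\sum_(i <- s | P i) F i) y = \sum_(i <- s | P i) lin (F i) y.
Proof. by apply: (big_morph (fun f => lin f y)) => [f g|]; rewrite ?linD ?lin0. Qed.

Lemma linZr f (k : R) y : lin f (k *: y) = k * lin f y.
Proof. by rewrite /lin mulr_sumr; apply: eq_bigr => i _; rewrite mxE mulrCA. Qed.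

Lemma lin_delta k y : lin (delta_mx 0 k) y = y 0 k.
Proof.
rewrite /lin (bigD1 k) //= big1 => [|l /negPf lk]; last by rewrite mxE lk rmorph0 mul0r.
by rewrite mxE !eqxx rmorph1 mul1r addr0.
Qed.

Lemma lin_mulmx s (M : 'M[rat]_(r, s)) y l :
  (y *m map_mx ratr M) 0 l = lin (\row_k M k l) y.
Proof. by rewrite !mxE; apply: eq_bigr => k _; rewrite !mxE mulrC. Qed.

Lemma intr_row_eq0 (z : 'rV[int]_r) : (map_mx (fun v : int => v%:~R : R) z == 0) = (z == 0).
Proof.
apply/eqP/eqP => [/rowP zE | ->]; last by apply/rowP => k; rewrite !mxE.
by apply/rowP => k; have := zE k; rewrite !mxE => /eqP; rewrite intr_eq0 => /eqP.
Qed.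

End LinearForms.

Section Approximation.
Variable R : realType.

Definition near_row r (b : 'rV[R]_r) (P : 'rV[R]_r -> Prop) :=
  exists2 e : R, 0 < e & forall y : 'rV[R]_r, (forall i, `|y 0 i - b 0 i| < e) -> P y.

Lemma near_row_mono r (b : 'rV[R]_r) (P Q : 'rV[R]_r -> Prop) :
  (forall y, P y -> Q y) -> near_row b P -> near_row b Q.
Proof. by move=> PQ [e e_gt0 bP]; exists e => // y /bP/PQ. Qed.

Lemma near_rowI r (b : 'rV[R]_r) (P Q : 'rV[R]_r -> Prop) :
  near_row b P -> near_row b Q -> near_row b (fun y => P y /\ Q y).
Proof.
move=> [e1 e1_gt0 bP] [e2 e2_gt0 bQ]; exists (Num.min e1 e2).
  by rewrite lt_min e1_gt0 e2_gt0.
by move=> y near_y; split; [apply: bP | apply: bQ] => i;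
  apply: lt_le_trans (near_y i) _; rewrite ge_min lexx ?orbT.
Qed.

Lemma near_row_all_in r (T : eqType) (s : seq T) (b : 'rV[R]_r)
    (P : T -> 'rV[R]_r -> Prop) :
  {in s, forall t, near_row b (P t)} -> near_row b (fun y => {in s, forall t, P t y}).
Proof.
elim: s => [|t s IHs] bP; first by exists 1 => // y _ t.
have bPs : {in s, forall t, near_row b (P t)} by move=> u us; apply: bP; rewrite inE us orbT.
apply: near_row_mono (near_rowI (bP t (mem_head t s)) (IHs bPs)) => y [Pt Ps] u.
by rewrite inE => /predU1P [-> | /Ps].
Qed.

Lemma near_row_lin r (f : 'rV[rat]_r) (c : 'rV[R]_r) (d : R) :
  0 < d -> near_row c (fun y => `|lin f y - lin f c| < d).
Proof.
move=> d_gt0; pose C := \sum_(k < r) `|(ratr (f 0 k) : R)|.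
have C_ge0 : 0 <= C by apply: sumr_ge0.
exists (d / (C + 1)); first by rewrite divr_gt0 // ltr_wpDl.
move=> y near_y.
have -> : lin f y - lin f c = \sum_(k < r) ratr (f 0 k) * (y 0 k - c 0 k).
  by rewrite /lin -sumrB; apply: eq_bigr => k _; rewrite mulrBr.
apply: le_lt_trans (ler_norm_sum _ _ _) _.
apply: (@le_lt_trans _ _ (C * (d / (C + 1)))).
  rewrite /C mulr_suml; apply: ler_sum => k _; rewrite normrM.
  by apply: ler_wpM2l => //; apply: ltW.
rewrite mulrA ltr_pdivrMr ?ltr_wpDl //; nra.
Qed.

Lemma near_row_sgz r (f : 'rV[rat]_r) (c : 'rV[R]_r) :
  lin f c != 0 -> near_row c (fun y => sgz (lin f y) = sgz (lin f c)).
Proof.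
rewrite -normr_gt0 => fc_gt0.
by apply: near_row_mono (near_row_lin f c fc_gt0) => y; apply: sgz_near.
Qed.

Lemma near_row_mulmx r s (M : 'M[rat]_(s, r)) (c : 'rV[R]_s) (P : 'rV[R]_r -> Prop) :
  near_row (c *m map_mx ratr M) P -> near_row c (fun c' => P (c' *m map_mx ratr M)).
Proof.
move=> [e e_gt0 cMP].
have near_cols : near_row c (fun y =>
    {in enum 'I_r, forall i, `|lin (\row_j M j i) y - lin (\row_j M j i) c| < e}).
  by apply: near_row_all_in => i _; apply: near_row_lin.
apply: near_row_mono near_cols => y near_y; apply: cMP => i.
by rewrite !lin_mulmx near_y ?mem_enum.
Qed.

Lemma near_row_rat r (c : 'rV[R]_r) (P : 'rV[R]_r -> Prop) :
  near_row c P -> exists x : 'rV[rat]_r, P (map_mx ratr x).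
Proof.
move=> [e e_gt0 cP].
have /fin_all_exists [q qP] i : exists q : rat, `|ratr q - c 0 i| < e.
  have [|q] := @rat_in_itvoo R (c 0 i - e) (c 0 i + e); first lra.
  by rewrite in_itv /= => q_near; exists q; rewrite distrC ltr_distlC.
by exists (\row_i q i); apply: cP => i; rewrite !mxE.
Qed.

(* The real kernel of [M] is spanned by rational vectors, by [map_kermx]. *)
Lemma near_row_rat_kernel r s (M : 'M[rat]_(r, s)) (b : 'rV[R]_r) (P : 'rV[R]_r -> Prop) :
  b *m map_mx ratr M = 0 -> near_row b P ->
  exists2 x : 'rV[rat]_r, x *m M = 0 & P (map_mx ratr x).
Proof.
move=> bM0; have /submxP[c ->] : (b <= map_mx ratr (kermx M))%MS.
  by rewrite map_kermx; apply/sub_kermxP.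
move=> /near_row_mulmx/near_row_rat[d Pd]; exists (d *m kermx M).
  by rewrite -mulmxA mulmx_ker mulmx0.
by rewrite map_mxM.
Qed.

Lemma rational_sign_approx r (fs : seq 'rV[rat]_r) (b : 'rV[R]_r) :
  exists x : 'rV[rat]_r,
    {in fs, forall f, sgz (lin f (map_mx ratr x : 'rV[R]_r)) = sgz (lin f b)}.
Proof.
pose fs0 := [seq f <- fs | lin f b == 0].
pose M : 'M[rat]_(r, size fs0) := \matrix_(k, l) fs0`_l 0 k.
have colM (l : 'I_(size fs0)) : \row_k M k l = fs0`_l by apply/rowP => k; rewrite !mxE.
have bM0 : b *m map_mx ratr M = 0.
  apply/rowP => l; rewrite lin_mulmx colM mxE.
  by have := mem_nth 0 (ltn_ord l); rewrite mem_filter => /andP[/eqP].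
have near_b : near_row b (fun y =>
    {in [seq f <- fs | lin f b != 0], forall f, sgz (lin f y) = sgz (lin f b)}).
  by apply: near_row_all_in => f; rewrite mem_filter => /andP[fb0 _]; apply: near_row_sgz.
have [x xM0 xP] := near_row_rat_kernel bM0 near_b; exists x => f f_fs.
have [fb0 | fb0] := eqVneq (lin f b) 0; last by apply: xP; rewrite mem_filter fb0.
have f_fs0 : f \in fs0 by rewrite mem_filter fb0 eqxx.
have f_idx : (index f fs0 < size fs0)%N by rewrite index_mem.
rewrite fb0 sgz0; apply/eqP; rewrite sgz_eq0 -(nth_index 0 f_fs0) -(colM (Ordinal f_idx)).
by rewrite -lin_mulmx -map_mxM xM0 map_mx0 mxE.
Qed.

Lemma rat_row_int_multiple r (x : 'rV[rat]_r) : exists2 d : int, 0 < d &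
  exists z : 'rV[int]_r, map_mx (fun v : int => v%:~R : R) z = d%:~R *: map_mx ratr x.
Proof.
exists (\prod_k denq (x 0 k)); first by apply: prodr_gt0 => k _; apply: denq_gt0.
exists (\row_k (numq (x 0 k) * \prod_(k' | k' != k) denq (x 0 k'))).
apply/rowP => k; rewrite !mxE [in RHS](bigD1 k) //= /ratr !intrM.
by field; rewrite intr_eq0 denq_neq0.
Qed.

Lemma integral_sign_approx r (fs : seq 'rV[rat]_r) (b : 'rV[R]_r) :
  exists z : 'rV[int]_r,
    {in fs, forall f, sgz (lin f (map_mx (fun v : int => v%:~R : R) z)) = sgz (lin f b)}.
Proof.
have [x xP] := rational_sign_approx fs b.
have [d d_gt0 [z zE]] := rat_row_int_multiple x.
by exists z => f f_fs; rewrite zE linZr sgzM gtr0_sgz ?ltr0z // mul1r xP.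
Qed.

End Approximation.

Section SignCone.
Variables (R : realType) (r n m : nat) (a : 'I_n -> 'rV[rat]_r) (alpha : 'I_m -> 'rV[rat]_r).

Definition Delta_form (b : 'rV[R]_r) : 'rV[rat]_r :=
  2^-1 *: \sum_(j < n) (sgz (lin (a j) b))%:~R *: a j
  - \sum_(i < m) (sgz (lin (alpha i) b))%:~R *: alpha i.

Lemma Delta_on_sign_cone (b y : 'rV[R]_r) :
  (forall j, sgz (lin (a j) y) = sgz (lin (a j) b)) ->
  (forall i, sgz (lin (alpha i) y) = sgz (lin (alpha i) b)) ->
  Delta a alpha y = lin (Delta_form b) y.
Proof.
move=> a_sgz alpha_sgz.
rewrite /Delta /Delta_form linD linN linZ !lin_sum fmorphV rmorph_nat.
congr (_ * _ - _); apply: eq_bigr => l _.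
  by rewrite linZ ratr_int (normr_sgz_eq (a_sgz l)).
by rewrite linZ ratr_int (normr_sgz_eq (alpha_sgz l)).
Qed.

End SignCone.

Theorem mainTheorem5 (R : realType) (r n m : nat)
  (a : 'I_n -> 'rV[rat]_r) (alpha : 'I_m -> 'rV[rat]_r) :
  (forall beta : 'rV[R]_r, beta != 0 -> 0 < Delta a alpha beta) <->
  (forall z : 'rV[int]_r, z != 0 -> 0 < Delta a alpha (map_mx (fun x : int => x%:~R : R) z)).
Proof.
split=> [Delta_gt0 z z_neq0 | Delta_int_gt0 b b_neq0].
  by apply: Delta_gt0; rewrite intr_row_eq0.
set D := Delta_form a alpha b.
pose fs := D :: codom a ++ codom alpha ++ codom (delta_mx 0).
have [z zP] := integral_sign_approx fs b.
set y := map_mx _ z in zP *.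
have sgz_a j : sgz (lin (a j) y) = sgz (lin (a j) b).
  by apply: zP; rewrite !inE mem_cat codom_f orbT.
have sgz_alpha i : sgz (lin (alpha i) y) = sgz (lin (alpha i) b).
  by apply: zP; rewrite !inE !mem_cat codom_f !orbT.
have sgz_coord k : sgz (y 0 k) = sgz (b 0 k).
  by rewrite -!lin_delta; apply: zP; rewrite !inE !mem_cat codom_f !orbT.
have z_neq0 : z != 0.
  rewrite -(intr_row_eq0 R) -/y; apply: contraNneq b_neq0 => y0; apply/eqP/rowP => k.
  by apply/eqP; rewrite mxE -sgz_eq0 -sgz_coord y0 mxE sgz0.
have Delta_b : Delta a alpha b = lin D b by apply: Delta_on_sign_cone.
have Delta_y : Delta a alpha y = lin D y by apply: Delta_on_sign_cone.
rewrite -sgz_gt0 Delta_b -(zP D) ?mem_head // -Delta_y sgz_gt0.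
exact: Delta_int_gt0.
Qed.
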